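(* Let $n$ and $k$ be integers with $n\ge 2$ and $2\le k\le 2^{n-1}+1$. Then $$v_2\big(s(2^n,2^n-k)\big)=\begin{cases} n-1-v_2(k) & \text{if } k \text{ is even},\\ 2n-2-v_2(k-1) & \text{if } k \text{ is odd}.\end{cases}$$
   Context: The (unsigned) Stirling numbers of the first kind $s(n,k)$ are defined by $x(x+1)\cdots(x+n-1)=\sum_{k=0}^n s(n,k)x^k$. $v_2$ denotes the $2$-adic valuation. *)

From HB Require Import structures.
From mathcomp Require Import all_boot all_order all_algebra.
Set Implicit Arguments. Unset Strict Implicit. Unset Printing Implicit Defensive.
Import GRing.Theory.
Local Open Scope ring_scope.

Definition rising_poly (n : nat) : {poly nat} := \prod_(i < n) ('X + (i : nat)%:R%:P).

Definition stirling1 (n k : nat) : nat := ((rising_poly n)`_k)%R.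

(* 2-adic valuation of a natural number (meaningful for nonzero arguments). *)
Definition v2 (m : nat) : nat := logn 2 m.

From mathcomp Require Import all_boot all_order all_algebra.
From mathcomp Require Import ring zify.
Import GRing.Theory.
Set Implicit Arguments. Unset Strict Implicit. Unset Printing Implicit Defensive.

(* s(N, N - k) is the k-th elementary symmetric function e_k of 0, 1, ..., N - 1,
   and Newton's identities give k e_k = sum_(i < k) (-1)^i p_(i+1) e_(k-1-i) with
   the power sums p_e = sum_(j < N) j^e.  For N = 2^n these are 2-adically rigid:
   v2(p_e) = n - 1 when e = 1 or e is even, while 2^(2n-2) divides p_e for odd
   e >= 3 (pair j with N - j).  By strong induction on k, one term of Newton's
   sum has strictly smallest valuation: p_1 e_(k-1) when k is odd, and p_k e_0
   when k is even. *)

Local Open Scope ring_scope.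

Fixpoint esym {R : nzSemiRingType} (s : seq R) (k : nat) : R :=
  match s, k with
  | [::], _ => (k == 0%N)%:R
  | _ :: _, 0%N => 1
  | a :: s', k'.+1 => esym s' k'.+1 + a * esym s' k'
  end.

Lemma esym0 (R : nzSemiRingType) (s : seq R) : esym s 0 = 1.
Proof. by case: s. Qed.

Lemma esym_gt_size (R : nzSemiRingType) (s : seq R) k :
  (size s < k)%N -> esym s k = 0.
Proof. by elim: s k => [|a s IH] [|k] //= ltsk; rewrite !IH ?mulr0 ?addr0 // ltnW. Qed.

Lemma esym_cons (R : nzSemiRingType) (a : R) s k :
  esym (a :: s) k = esym s k + (if k is k'.+1 then a * esym s k' else 0).
Proof. by case: k => [|k] /=; rewrite ?esym0 ?addr0. Qed.

Lemma rmorph_esym (R S : nzSemiRingType) (f : {rmorphism R -> S}) s k :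
  f (esym s k) = esym (map f s) k.
Proof.
elim: s k => [|a s IH] [|k] /=; rewrite ?rmorph_nat ?rmorph1 //.
by rewrite rmorphD rmorphM !IH.
Qed.

Lemma coef_prod_XaddC (R : comNzSemiRingType) (s : seq R) j :
  (\prod_(a <- s) ('X + a%:P))`_j = if (j <= size s)%N then esym s (size s - j) else 0.
Proof.
elim: s j => [|a s IH] j; first by rewrite big_nil coef1; case: j.
rewrite big_cons mulrDl coefD coefXM coefCM.
case: j => [|j]; first by rewrite /= IH leq0n subn0 add0r (@esym_gt_size _ s (size s).+1) ?add0r.
rewrite /= !IH ltnS subSS; case: (ltngtP j (size s)) => [ltjs|//|->].
- by rewrite -(subnSK ltjs).
- by rewrite mulr0 addr0.
- by rewrite subnn esym0 mulr0 addr0.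
Qed.

Lemma stirling1_esym N k : (k <= N)%N -> stirling1 N (N - k) = esym (iota 0 N) k.
Proof.
move=> leqkN; rewrite /stirling1 /rising_poly -(big_mkord xpredT (fun i => 'X + i%:R%:P)).
rewrite /index_iota subn0 (eq_bigr (fun a => 'X + a%:P)) => [|i _]; last by rewrite natn.
by rewrite coef_prod_XaddC size_iota leq_subr subKn.
Qed.

Definition psum (R : nzSemiRingType) (s : seq R) e := \sum_(a <- s) a ^+ e.

Lemma newton_cons_term (R : comNzRingType) (a : R) s k :
  \sum_(i < k.+1) (-1) ^+ i * a ^+ i.+1 * esym (a :: s) (k - i) = a * esym s k.
Proof.
elim: k => [|k IH]; first by rewrite big_ord1 /= expr0 mul1r expr1 esym0 mulr1.
rewrite big_ord_recl subn0 (eq_bigr (fun i : 'I_k.+1 =>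
  - a * ((-1) ^+ i * a ^+ i.+1 * esym (a :: s) (k - i)))) => [|i _]; last first.
  by rewrite /= subSS !exprS; ring.
by rewrite -mulr_sumr IH /=; ring.
Qed.

Lemma newton_esym (R : comNzRingType) (s : seq R) k :
  k%:R * esym s k = \sum_(i < k) (-1) ^+ i * psum s i.+1 * esym s (k - i.+1).
Proof.
elim: s k => [|a s IH] k.
  rewrite big1 => [|i _]; last by rewrite /psum big_nil mulr0 mul0r.
  by case: k => [|k] /=; rewrite ?mulr0 ?mul0r.
case: k => [|k]; first by rewrite mul0r big_ord0.
rewrite (eq_bigr (fun i : 'I_k.+1 => (-1) ^+ i * a ^+ i.+1 * esym (a :: s) (k - i) +
   ((-1) ^+ i * psum s i.+1 * esym s (k.+1 - i.+1) +
    (-1) ^+ i * psum s i.+1 * (if (k - i)%N is j.+1 then a * esym s j else 0))));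
  last by move=> i _; rewrite subSS /psum big_cons esym_cons; case: (k - i)%N => [|j]; ring.
rewrite !big_split /= newton_cons_term -IH big_ord_recr /= subnn mulr0 addr0.
rewrite (eq_bigr (fun i : 'I_k => a * ((-1) ^+ i * psum s i.+1 * esym s (k - i.+1))));
  last by move=> i _; rewrite /= -(subnSK (ltn_ord i)); ring.
by rewrite -mulr_sumr -IH /= -addn1 natrD; ring.
Qed.

Definition exact_v2 (x : int) (a : nat) := (x != 0) && (v2 `|x| == a).

Lemma dvdz_pow2 (x : int) a : x != 0 -> (2 ^+ a %| x)%Z = (a <= v2 `|x|)%N.
Proof. by move=> nz_x; rewrite dvdzE abszX pfactor_dvdn // absz_gt0. Qed.

Lemma exact_v2E x a : exact_v2 x a = (2 ^+ a %| x)%Z && ~~ (2 ^+ a.+1 %| x)%Z.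
Proof.
have [->|nz_x] := eqVneq x 0; first by rewrite /exact_v2 eqxx !dvdz0.
by rewrite /exact_v2 nz_x !dvdz_pow2 // -ltnNge ltnS -eqn_leq eq_sym.
Qed.

Lemma exact_v2_dvd x a b : exact_v2 x a -> (2 ^+ b %| x)%Z = (b <= a)%N.
Proof. by case/andP=> nz_x /eqP <-; rewrite dvdz_pow2. Qed.

Lemma dvdz_pow2W (x : int) a b : (b <= a)%N -> (2 ^+ a %| x)%Z -> (2 ^+ b %| x)%Z.
Proof. by move/(dvdz_exp2l 2); apply: dvdz_trans. Qed.

Lemma exact_v2N x a : exact_v2 (- x) a = exact_v2 x a.
Proof. by rewrite /exact_v2 oppr_eq0 abszN. Qed.

Lemma exact_v2D x y a : exact_v2 x a -> (2 ^+ a.+1 %| y)%Z -> exact_v2 (x + y) a.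
Proof.
rewrite !exact_v2E => /andP[dvd_x ndvd_x] dvd_y.
rewrite rpredD ?(dvdz_pow2W (leqnSn a) dvd_y) //=.
by apply: contra ndvd_x => dvd_xy; rewrite -(addrK y x) rpredB.
Qed.

Lemma exact_v2M x y a b : exact_v2 x a -> exact_v2 y b -> exact_v2 (x * y) (a + b).
Proof.
case/andP=> nz_x /eqP <-; case/andP=> nz_y /eqP <-.
by rewrite /exact_v2 mulf_neq0 //= abszM /v2 lognM ?absz_gt0.
Qed.

Lemma exact_v2_mulKl x y a b : exact_v2 (x * y) b -> exact_v2 x a -> exact_v2 y (b - a).
Proof.
case/andP=> nz_xy /eqP <-; case/andP=> nz_x /eqP <-.
have nz_y : y != 0 by apply: contraNneq nz_xy => ->; rewrite mulr0.
by rewrite /exact_v2 nz_y abszM /v2 lognM ?absz_gt0 // addKn eqxx.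
Qed.

Lemma exact_v2_nat m : (0 < m)%N -> exact_v2 m%:Z (v2 m).
Proof. by rewrite /exact_v2 absz_nat eqxx andbT eqz_nat -lt0n. Qed.

Lemma exact_v2_pow2 a : exact_v2 (2 ^+ a) a.
Proof. by rewrite /exact_v2 expf_neq0 //= abszX /v2 pfactorK. Qed.

Lemma sqr_dvdz_expD (x d : int) e :
  (d ^+ 2 %| (x + d) ^+ e - x ^+ e - e%:R * d * x ^+ e.-1)%Z.
Proof.
elim: e => [|[|e] IH]; first by rewrite !expr0 !mul0r subrr.
  by rewrite !expr1 expr0 mulr1 mul1r (_ : x + d - x - d = 0) ?dvdz0 //; ring.
case/dvdzP: IH => q Dq; apply/dvdzP; exists (q * (x + d) + e.+1%:R * x ^+ e).
have Dxd : (x + d) ^+ e.+1 = q * d ^+ 2 + x ^+ e.+1 + e.+1%:R * d * x ^+ e.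
  by rewrite -Dq /=; ring.
by rewrite exprS Dxd /= (mulrSr 1 e.+1) !exprS; ring.
Qed.

Definition pow_sum n e : int := \sum_(j < 2 ^ n) j%:Z ^+ e.

Lemma Posz_exp2 n : (2 ^ n)%N%:Z = 2 ^+ n.
Proof. by rewrite -natz natrX. Qed.

Lemma pow_sum0 n : pow_sum n 0 = 2 ^+ n.
Proof.
rewrite /pow_sum (eq_bigr (fun=> 1)) => [|j _]; last exact: expr0.
by rewrite sumr_const card_ord -Posz_exp2 -natz.
Qed.

Lemma pow_sumS n e : exists2 z, ((2 ^+ n) ^+ 2 %| z)%Z &
  pow_sum n.+1 e = 2 * pow_sum n e + e%:R * 2 ^+ n * pow_sum n e.-1 + z.
Proof.
exists (\sum_(j < 2 ^ n)
  ((j%:Z + 2 ^+ n) ^+ e - j%:Z ^+ e - e%:R * 2 ^+ n * j%:Z ^+ e.-1)).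
  by apply: rpred_sum => j _; apply: sqr_dvdz_expD.
rewrite /pow_sum expnS mul2n -addnn big_split_ord /=.
under [X in _ + X]eq_bigr => j _ do rewrite PoszD Posz_exp2 addrC.
by rewrite !sumrB -mulr_sumr; ring.
Qed.

Lemma exact_v2_pow_sum n e : (0 < e)%N -> (e == 1%N) || ~~ odd e ->
  exact_v2 (pow_sum n.+1 e) n.
Proof.
move=> e_gt0 e_1_or_even; elim: n => [|n IH].
  rewrite /pow_sum big_ord_recr big_ord1 /= expr0n expr1n.
  by case: e e_gt0 {e_1_or_even} => // e _; rewrite add0r /exact_v2.
have [z dvd_z ->] := pow_sumS n.+1 e.
apply: exact_v2D; last by move: dvd_z; rewrite -exprM; apply: dvdz_pow2W; lia.
apply: exact_v2D.
  by rewrite -add1n -[X in X * _]expr1; apply: exact_v2M (exact_v2_pow2 1) IH.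
case/orP: e_1_or_even => [/eqP -> | e_even].
  by rewrite mul1r pow_sum0 -exprD dvdz_exp2l //; lia.
have De : e%:R = (e./2)%:R * 2 :> int by rewrite -natrM muln2 even_halfK.
have -> : e%:R * 2 ^+ n.+1 * pow_sum n.+1 e.-1 =
          (e./2)%:R * pow_sum n.+1 e.-1 * 2 ^+ n.+2 by rewrite De !exprS; ring.
exact: dvdz_mull (dvdzz _).
Qed.

Lemma sum_exp_rev m e : (0 < e)%N ->
  \sum_(j < m) (m%:Z - j%:Z) ^+ e = \sum_(j < m) j%:Z ^+ e + m%:Z ^+ e.
Proof.
move=> e_gt0; elim: m => [|m IH]; first by rewrite !big_ord0 expr0n add0r gtn_eqF.
rewrite big_ord_recl big_ord_recr /= subr0.
under eq_bigr => i _ do rewrite /bump leq0n add1n !intS opprD addrACA subrr add0r.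
by rewrite IH; ring.
Qed.

Lemma dvdz_pow_sum_odd n e : odd e -> (3 <= e)%N -> (2 ^+ (2 * n) %| pow_sum n.+1 e)%Z.
Proof.
case: e => [//|e] /= even_e e_ge3.
have dvd_rem : ((2 ^+ n.+1) ^+ 2 %| \sum_(j < 2 ^ n.+1)
    ((2 ^+ n.+1 - j%:Z) ^+ e.+1 + j%:Z ^+ e.+1 - e.+1%:R * 2 ^+ n.+1 * j%:Z ^+ e))%Z.
  apply: rpred_sum => j _; have := sqr_dvdz_expD (- j%:Z) (2 ^+ n.+1) e.+1.
  rewrite (addrC (- _)) (exprNn _ e.+1) (exprNn _ e) -(signr_odd _ e.+1) -(signr_odd _ e) /=.
  by rewrite (negbTE even_e) expr1 expr0 mulN1r mul1r opprK.
have := sum_exp_rev (2 ^ n.+1) (ltn0Sn e); rewrite Posz_exp2 => sum_rev.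
rewrite !sumrB big_split /= sum_rev -mulr_sumr -/(pow_sum n.+1 e.+1) -/(pow_sum n.+1 e) in dvd_rem.
have P'_dvd : (2 ^+ n %| pow_sum n.+1 e)%Z.
  have e_gt0 : (0 < e)%N by lia.
  by rewrite (exact_v2_dvd _ (exact_v2_pow_sum n e_gt0 _)) // even_e orbT.
move: dvd_rem P'_dvd; set N : int := 2 ^+ n.+1.
set P := pow_sum n.+1 e.+1; set P' := pow_sum n.+1 e => dvd_rem P'_dvd.
have dvd2P : (2 ^+ (2 * n).+1 %| 2 * P)%Z.
  have -> : 2 * P = (P + N ^+ e.+1 + P - e.+1%:R * N * P') - N ^+ e.+1 + e.+1%:R * N * P'.
    by ring.
  apply: rpredD; first apply: rpredB.
  - have dvd_N2 : (2 ^+ (2 * n).+1 %| N ^+ 2)%Z by rewrite /N -exprM dvdz_exp2l //; lia.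
    exact: dvdz_trans dvd_N2 dvd_rem.
  - by rewrite /N -exprM dvdz_exp2l //; nia.
  - rewrite mulrAC (_ : (2 * n).+1 = n + n.+1)%N; last by lia.
    by rewrite exprD; apply: dvdz_mul; [apply: dvdz_mull | apply: dvdzz].
by rewrite exprS dvdz_mul2l in dvd2P.
Qed.

Lemma dvdz_pow_sum n e : (0 < e)%N -> (2 ^+ n %| pow_sum n.+1 e)%Z.
Proof.
move=> e_gt0; have [/andP[e_odd e_neq1] | e_1_or_even] := boolP (odd e && (e != 1%N)).
  have e_ge3 : (3 <= e)%N by case: e e_gt0 e_odd e_neq1 => [|[|[|e]]].
  by apply: dvdz_pow2W _ (dvdz_pow_sum_odd n e_odd e_ge3); lia.
rewrite (exact_v2_dvd _ (exact_v2_pow_sum n e_gt0 _)) //.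
by rewrite negb_and negbK orbC in e_1_or_even.
Qed.

Lemma v2_lt_exp2 j m : (0 < j)%N -> (j < 2 ^ m)%N -> (v2 j < m)%N.
Proof.
move=> j_gt0 lt_j; rewrite -(ltn_exp2l _ _ (ltnSn 1)).
exact: leq_ltn_trans (dvdn_leq j_gt0 (pfactor_dvdnn 2 j)) lt_j.
Qed.

Lemma v2_gt0 j : (0 < j)%N -> ~~ odd j -> (0 < v2 j)%N.
Proof. by move=> j_gt0 j_even; rewrite /v2 -pfactor_dvdn // expn1 dvdn2. Qed.

Lemma v2_odd j : odd j -> v2 j = 0%N.
Proof. by move=> j_odd; rewrite /v2 logn_coprime // coprime2n. Qed.

Lemma dvdz_sign_mul a b i (x y : int) :
  (2 ^+ a %| x)%Z -> (2 ^+ b %| y)%Z -> (2 ^+ (a + b) %| (-1) ^+ i * x * y)%Z.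
Proof. by move=> dvd_x dvd_y; rewrite -mulrA exprD; apply/dvdz_mull/dvdz_mul. Qed.

Section DyadicRange.

Variable m : nat.
Hypothesis m_gt0 : (0 < m)%N.

Local Notation E := (esym (map Posz (iota 0 (2 ^ m.+1)))).

Lemma newton_dyadic k :
  k%:R * E k = \sum_(i < k) (-1) ^+ i * pow_sum m.+1 i.+1 * E (k - i.+1).
Proof.
rewrite newton_esym; apply: eq_bigr => i _; congr (_ * _ * _).
by rewrite /psum big_map /pow_sum -(big_mkord xpredT (fun j : nat => j%:Z ^+ i.+1)) /index_iota subn0.
Qed.

Lemma exact_v2_esym1 : exact_v2 (E 1) m.
Proof.
have := newton_dyadic 1; rewrite big_ord1 expr0 esym0 !mul1r mulr1 => ->.
exact: exact_v2_pow_sum.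
Qed.

Lemma exact_v2_esym_odd K : ~~ odd K -> (0 < K)%N -> (v2 K <= m)%N ->
  (forall j, (0 < j < K)%N -> odd j -> (2 ^+ m %| E j)%Z) ->
  exact_v2 (E K) (m - v2 K) -> exact_v2 (E K.+1) (2 * m - v2 K).
Proof.
move=> K_even K_gt0 v2K_le dvd_odd exact_EK; have v2K_gt0 := v2_gt0 K_gt0 K_even.
have : exact_v2 (K.+1%:R * E K.+1) (m + (m - v2 K)).
  rewrite newton_dyadic big_ord_recl expr0 mul1r subSS subn0.
  apply: exact_v2D; first exact: exact_v2M (exact_v2_pow_sum _ _ _) exact_EK.
  apply: rpred_sum => i _; rewrite lift0 subSS.
  apply: (@dvdz_pow2W _ (2 * m)); first by lia.
  have [i_odd | i_even] := boolP (odd i).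
    apply/dvdz_mulr/dvdz_mull/dvdz_pow_sum_odd; first by rewrite /= negbK.
    by rewrite !ltnS odd_gt0.
  have j_odd : odd (K - i.+1) by rewrite oddB ?(negbTE K_even) //= i_even.
  have j_range : (0 < K - i.+1 < K)%N by rewrite odd_gt0 //=; lia.
  rewrite mul2n -addnn; exact: dvdz_sign_mul _ (dvdz_pow_sum _ _) (dvd_odd _ j_range j_odd).
rewrite natz => /exact_v2_mulKl/(_ (exact_v2_nat (ltn0Sn K))).
have v2_K1 : v2 K.+1 = 0%N by rewrite v2_odd //= K_even.
by rewrite v2_K1 subn0 (_ : m + (m - v2 K) = 2 * m - v2 K)%N //; lia.
Qed.

Lemma exact_v2_esym_even K : odd K ->
  (forall j, (0 < j <= K)%N -> (2 ^+ (if odd j then m else 1%N) %| E j)%Z) ->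
  exact_v2 (E K.+1) (m - v2 K.+1).
Proof.
move=> K_odd dvdE.
have : exact_v2 (K.+1%:R * E K.+1) m.
  rewrite newton_dyadic big_ord_recr /= subnn esym0 mulr1 -signr_odd K_odd mulN1r addrC.
  apply: exact_v2D; first by rewrite exact_v2N exact_v2_pow_sum //= negbK K_odd orbT.
  apply: rpred_sum => i _; rewrite subSS.
  have j_range : (0 < K - i <= K)%N by rewrite subn_gt0 ltn_ord leq_subr.
  have := dvdE _ j_range; rewrite oddB ?K_odd 1?ltnW // addTb.
  by case: (odd i) => dvd_Ej;
    apply: dvdz_pow2W _ (dvdz_sign_mul _ (dvdz_pow_sum _ _) dvd_Ej); rewrite /=; lia.
by rewrite natz => /exact_v2_mulKl/(_ (exact_v2_nat (ltn0Sn K))).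
Qed.

Lemma exact_v2_esym_dyadic k : (2 <= k <= 2 ^ m + 1)%N ->
  exact_v2 (E k) (if ~~ odd k then (m - v2 k)%N else (2 * m - v2 (k - 1))%N).
Proof.
elim/ltn_ind: k => k IH /andP[k_ge2 k_le].
have dvdE j : (0 < j < k)%N -> (j < 2 ^ m)%N ->
    (2 ^+ (if odd j then m else 1%N) %| E j)%Z.
  case/andP=> j_gt0 j_lt_k j_lt; have v2j := v2_lt_exp2 j_gt0 j_lt.
  have [-> | j_neq1] := eqVneq j 1%N; first by rewrite (exact_v2_dvd _ exact_v2_esym1).
  have j_range : (2 <= j <= 2 ^ m + 1)%N by rewrite ltn_neqAle eq_sym j_neq1 j_gt0 /=; lia.
  rewrite (exact_v2_dvd _ (IH j j_lt_k j_range)); case: (odd j) => /=; last by lia.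
  have : (v2 (j - 1) < m)%N by apply: v2_lt_exp2; lia.
  lia.
case: k IH k_ge2 k_le dvdE => [//|K] IH K_gt0 K_le dvdE.
rewrite oddS negbK subSS subn0; have [K_odd | K_even] := boolP (odd K).
  have K_lt : (K < 2 ^ m)%N.
    rewrite ltn_neqAle (_ : K <= 2 ^ m)%N ?andbT; last by lia.
    by apply: contraTneq K_odd => ->; rewrite oddX eqn0Ngt m_gt0.
  by apply: exact_v2_esym_even K_odd _ => j j_range; apply: dvdE; lia.
apply: (exact_v2_esym_odd K_even K_gt0).
- by rewrite -ltnS; apply: v2_lt_exp2 K_gt0 _; rewrite expnS; lia.
- by move=> j j_range j_odd; move: (dvdE j); rewrite j_odd; apply; lia.
- by have := IH K (ltnSn K); rewrite K_even; apply; lia.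
Qed.

End DyadicRange.

Theorem corollary1p3 (n k : nat) :
  (2 <= n)%N -> (2 <= k)%N -> (k <= 2 ^ n.-1 + 1)%N ->
  v2 (stirling1 (2 ^ n) (2 ^ n - k)) =
    (if ~~ odd k then (n - 1 - v2 k)%N else (2 * n - 2 - v2 (k - 1))%N).
Proof.
case: n => [//|m] m_gt0 k_ge2 /= k_le.
have k_le_N : (k <= 2 ^ m.+1)%N by rewrite expnS; lia.
have := exact_v2_esym_dyadic m_gt0 (introT andP (conj k_ge2 k_le)).
rewrite -(rmorph_esym Posz) => /andP[_ /eqP].
rewrite absz_nat -(stirling1_esym k_le_N) => ->.
by case: ifP => _; lia.
Qed.
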